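(* Let $X$ be a Hilbert space with orthonormal basis $(e_n)_{n\in\mathbb{N}}$ and let $(\lambda_n)_{n\in\mathbb{N}}\subset\{z\in\mathbb{C}:\Re z<0\}$ be such that $(\Re\lambda_n)$ is monotonically decreasing with $\lim_{n\to\infty}\Re\lambda_n=-\infty$ and $|\operatorname{Im}\lambda_n|\le k|\Re\lambda_n|$ for some $k>0$ and all $n$. Let $Ae_n=\lambda_ne_n$ with $D(A)=\{x=\sum_nx_ne_n:\sum_n|\lambda_nx_n|^2<\infty\}$. Let $U:=X$ and $B:=A_{-1}\in\mathcal{L}(U,X_{-1})$. Then: (i) for every $u\in U$, the operator $Bu\in\mathcal{L}(\mathbb{C},X_{-1})$, $z\mapsto zBu$, is $L^\infty$-admissible for $A$; (ii) $B$ is not $L^\infty$-admissible for $A$; (iii) $\sup_{\Re\lambda>0}\|R(\lambda,A_{-1})B\|_{\mathcal{L}(U,X)}<\infty$.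
   Context: $X_{-1}$ is the completion of $X$ w.r.t. $\|(\beta-A)^{-1}\cdot\|$, $\beta\in\rho(A)$; $A_{-1}$, $T_{-1}$ are the extensions of $A$ and its semigroup $T$ to $X_{-1}$; $R(\lambda,A_{-1})=(\lambda-A_{-1})^{-1}$. An operator $B\in\mathcal{L}(U,X_{-1})$ is $L^\infty$-admissible if for every $t>0$ the map $u\mapsto\int_0^tT_{-1}(s)Bu(s)ds$ sends $L^\infty(0,t;U)$ into $X$. *)

From mathcomp Require Import all_boot all_algebra.
From mathcomp Require Import all_classical all_reals all_analysis.
From mathcomp Require Export complex.
Import GRing.Theory Num.Theory.
Set Implicit Arguments. Unset Strict Implicit. Unset Printing Implicit Defensive.
Local Open Scope ring_scope.
Local Open Scope classical_set_scope.
Local Open Scope complex_scope.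

Section Defs.
Variable R : realType.
Local Notation C := R[i].

Definition cabs2 (z : C) : R := (complex.Re z) ^+ 2 + (complex.Im z) ^+ 2.

Definition cexp (z : C) : C :=
  (expR (complex.Re z) * cos (complex.Im z)) +i* (expR (complex.Re z) * sin (complex.Im z)).

Definition l2norm2 (x : nat -> C) : \bar R :=
  (\sum_(0 <= n <oo) (cabs2 (x n))%:E)%E.

(** x = sum_n x_n e_n belongs to X (the Hilbert space, identified with l^2). *)
Definition in_X (x : nat -> C) : Prop := (l2norm2 x < +oo)%E.

Definition cintegral (t : R) (f : R -> C) : C :=
  (Rintegral (@lebesgue_measure R) `]0, t[ (fun s => complex.Re (f s)))
  +i* (Rintegral (@lebesgue_measure R) `]0, t[ (fun s => complex.Im (f s))).

Definition Linf_C (t : R) (f : R -> C) : Prop :=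
  [/\ measurable_fun `]0, t[ (fun s => complex.Re (f s)),
      measurable_fun `]0, t[ (fun s => complex.Im (f s)) &
      exists M : R, {ae (@lebesgue_measure R), forall s, `]0, t[ s ->
                       cabs2 (f s) <= M}].

(** u belongs to L^oo(0,t; U) with U = X = l^2 (coordinates u s n):
    (weakly, hence by Pettis strongly) measurable and essentially bounded. *)
Definition Linf_X (t : R) (u : R -> nat -> C) : Prop :=
  [/\ (forall n, measurable_fun `]0, t[ (fun s => complex.Re (u s n))),
      (forall n, measurable_fun `]0, t[ (fun s => complex.Im (u s n))) &
      exists M : R, {ae (@lebesgue_measure R), forall s, `]0, t[ s ->
                       (l2norm2 (u s) <= M%:E)%E}].

(** Elements of X_{-1} are represented by their coordinate sequences
    (X_{-1} = { x : sum_n |x_n|^2/|beta - lambda_n|^2 < oo }).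
    Given an X_{-1}-valued g, int_0^t T_{-1}(s) g(s) ds is computed
    coordinatewise (coordinate functionals are continuous on X_{-1}). *)
Definition T_m1 (lam : nat -> C) (s : R) (x : nat -> C) : nat -> C :=
  fun n => cexp (lam n * s%:C) * x n.

Definition integral_T_m1 (lam : nat -> C) (t : R) (g : R -> nat -> C)
  : nat -> C :=
  fun n => cintegral t (fun s => T_m1 lam s (g s) n).

Definition A_m1 (lam : nat -> C) (x : nat -> C) : nat -> C :=
  fun n => lam n * x n.

Definition res_A_m1 (lam : nat -> C) (z : C) (x : nat -> C) : nat -> C :=
  fun n => (z - lam n)^-1 * x n.

Definition Linf_admissible_X (lam : nat -> C) (B : (nat -> C) -> nat -> C)
  : Prop :=
  forall t : R, 0 < t -> forall u : R -> nat -> C, Linf_X t u ->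
    in_X (integral_T_m1 lam t (fun s => B (u s))).

Definition Linf_admissible_C (lam : nat -> C) (B : C -> nat -> C) : Prop :=
  forall t : R, 0 < t -> forall f : R -> C, Linf_C t f ->
    in_X (integral_T_m1 lam t (fun s => B (f s))).

End Defs.

(* Everything is diagonal, so all three claims are coordinatewise estimates.
   The sector condition gives |lam_n|^2 <= (1 + k^2) (Re lam_n)^2.  For (i), the
   n-th coordinate of int_0^t T_{-1}(s) f(s) A_{-1} u ds is bounded by
   sqrt 2 |f|_oo |lam_n u_n| / |Re lam_n|, hence by a multiple of |u_n|.  For
   (iii), |z - lam_n| >= |Re lam_n| when Re z > 0.  For (ii), choose indices
   n_j with r_j := -Re lam_{n_j} >= 2 and r_{j+1} >= 2 r_j, so that the windows
   [1/r_j, 2/r_j[ are disjoint subsets of ]0, 1[.  The input equal on the j-th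
   window to the matched control conj(e^{lam s} lam) / |lam| in coordinate n_j,
   and 0 elsewhere, has norm at most 1 at all times, yet each coordinate n_j of
   the response is at least e^{-4}: the response is not square summable. *)

From mathcomp Require Import all_boot all_algebra.
From mathcomp Require Import all_classical all_reals all_analysis.
From mathcomp Require Import complex ring lra.
From mathcomp Require Import measurable_realfun exponential_distribution.
Import GRing.Theory Num.Theory order.Order.TTheory.
Set Implicit Arguments. Unset Strict Implicit. Unset Printing Implicit Defensive.
Local Open Scope ring_scope.
Local Open Scope classical_set_scope.
Local Open Scope complex_scope.

Local Notation Re := complex.Re.
Local Notation Im := complex.Im.

Section ComplexModulus.
Variable R : realType.
Implicit Types (x y l w : R[i]) (c : R).

Lemma cabs2_ge0 x : 0 <= cabs2 x.
Proof. by rewrite /cabs2 addr_ge0 // sqr_ge0. Qed.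

Lemma cabs2M x y : cabs2 (x * y) = cabs2 x * cabs2 y.
Proof. by case: x y => a b [c d]; rewrite /cabs2 /=; ring. Qed.

Lemma cabs2J x : cabs2 x^*%C = cabs2 x.
Proof. by case: x => a b; rewrite /cabs2 /=; ring. Qed.

Lemma cabs2_real c : cabs2 c%:C = c ^+ 2.
Proof. by rewrite /cabs2 /=; ring. Qed.

Lemma cabs2V x : cabs2 x^-1 = (cabs2 x)^-1.
Proof.
have [->|x0] := eqVneq x 0; first by rewrite invr0 /cabs2 /= expr0n /= addr0 invr0.
have c0 : cabs2 x != 0.
  apply: contra x0; case: x => a b; rewrite /cabs2 /= paddr_eq0 ?sqr_ge0 //.
  by rewrite !sqrf_eq0 => /andP[/eqP -> /eqP ->].
by apply: (mulfI c0); rewrite -cabs2M !divff // /cabs2 /= expr0n /= addr0 expr1n.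
Qed.

Lemma sqr_Re_le_cabs2 x : Re x ^+ 2 <= cabs2 x.
Proof. by rewrite /cabs2 lerDl sqr_ge0. Qed.

Lemma normr_Re_le x : `|Re x| <= Num.sqrt (cabs2 x).
Proof. by rewrite -sqrtr_sqr ler_wsqrtr // sqr_Re_le_cabs2. Qed.

Lemma normr_Im_le x : `|Im x| <= Num.sqrt (cabs2 x).
Proof. by rewrite -sqrtr_sqr ler_wsqrtr // /cabs2 lerDr sqr_ge0. Qed.

Lemma Re_mul x y : Re (x * y) = Re x * Re y - Im x * Im y.
Proof. by case: x y => a b [c d]. Qed.

Lemma Im_mul x y : Im (x * y) = Re x * Im y + Im x * Re y.
Proof. by case: x y => a b [c d] /=; ring. Qed.

Lemma Re_mul_real x c : Re (x * c%:C) = Re x * c.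
Proof. by case: x => a b /=; ring. Qed.

Lemma Im_mul_real x c : Im (x * c%:C) = Im x * c.
Proof. by case: x => a b /=; ring. Qed.

Lemma cabs2_cexp x : cabs2 (cexp x) = expR (Re x) ^+ 2.
Proof. by rewrite /cabs2 /cexp /= !exprMn -mulrDr cos2Dsin2 mulr1. Qed.

Lemma mul_real_conj w c :
  w * (c%:C * w^*%C) = (c * cabs2 w)%:C.
Proof.
by case: w => a b; apply/eqP; rewrite eq_complex /cabs2 /=;
  apply/andP; split; apply/eqP; ring.
Qed.

Lemma sector_cabs2_le k l : `|Im l| <= k * `|Re l| ->
  cabs2 l <= (1 + k ^+ 2) * Re l ^+ 2.
Proof.
move=> Hl; have Hl2 : `|Im l| ^+ 2 <= (k * `|Re l|) ^+ 2.
  by rewrite lerXn2r // ?nnegrE // (le_trans _ Hl).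
by move: Hl2; rewrite exprMn !real_normK ?num_real // /cabs2; lra.
Qed.

End ComplexModulus.

Section ComplexMeasurable.
Variables (R : realType) (D : set R).

Definition cmeasurable (F : R -> R[i]) :=
  measurable_fun D (fun s => Re (F s)) /\ measurable_fun D (fun s => Im (F s)).

Lemma cmeasurableM F G : cmeasurable F -> cmeasurable G ->
  cmeasurable (fun s => F s * G s).
Proof.
move=> [mF1 mF2] [mG1 mG2]; split.
- under eq_fun do rewrite Re_mul.
  by apply: measurable_funB; apply: measurable_funM.
- under eq_fun do rewrite Im_mul.
  by apply: measurable_funD; apply: measurable_funM.
Qed.

Lemma cmeasurable_cst c : cmeasurable (fun _ => c).
Proof. by split; apply: measurable_cst. Qed.

Lemma cmeasurable_real (f : R -> R) :
  measurable_fun D f -> cmeasurable (fun s => (f s)%:C).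
Proof. by move=> mf; split => //=; apply: measurable_cst. Qed.

Lemma cmeasurableJ F : cmeasurable F -> cmeasurable (fun s => (F s)^*%C).
Proof.
move=> [m1 m2]; split.
- by rewrite (_ : (fun s => _) = (fun s => Re (F s))) // funeqE => s; case: (F s).
- rewrite (_ : (fun s => _) = (fun s => - Im (F s))); first exact: measurable_funN.
  by rewrite funeqE => s; case: (F s).
Qed.

Lemma cmeasurable_cexp l : cmeasurable (fun s => cexp (l * s%:C)).
Proof.
have mexp : measurable_fun D (fun s => expR (Re l * s)).
  by apply: measurableT_comp; [exact: measurable_expR|exact: mulrl_measurable].
rewrite /cmeasurable /cexp /=; under eq_fun do rewrite Re_mul_real Im_mul_real.
under [X in _ /\ measurable_fun _ X]eq_fun do rewrite Re_mul_real Im_mul_real.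
split; apply: measurable_funM => //;
  (apply: measurableT_comp; last exact: mulrl_measurable);
  apply: continuous_measurable_fun; [exact: continuous_cos|exact: continuous_sin].
Qed.

End ComplexMeasurable.

Section RealIntegralBounds.
Variable R : realType.
Local Notation mu := (@lebesgue_measure R).

Lemma ae_mono (P Q : R -> Prop) : (forall x, P x -> Q x) ->
  {ae mu, forall x, P x} -> {ae mu, forall x, Q x}.
Proof.
move=> PQ [N [mN N0 HN]]; exists N; split => // x /= nQx.
by apply: HN => /= Px; apply/nQx/PQ.
Qed.

Lemma le_normr_Rintegral_dominated (D : set R) (g h : R -> R) (c : R) :
  measurable D -> measurable_fun D g -> measurable_fun D h ->
  (forall s, D s -> 0 <= h s) ->
  {ae mu, forall s, D s -> `|g s| <= h s} ->
  (\int[mu]_(s in D) (h s)%:E <= c%:E)%E ->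
  `|\int[mu]_(s in D) g s| <= c.
Proof.
move=> mD mg mh h0 gh hc.
have ig_le : (\int[mu]_(s in D) `|g s|%:E <= c%:E)%E.
  apply: (le_trans _ hc); apply: ae_ge0_le_integral => //.
  - exact/measurable_EFinP/measurableT_comp.
  - exact/measurable_EFinP.
have ig : mu.-integrable D (EFin \o g).
  apply/integrableP; split; first exact/measurable_EFinP.
  by apply: le_lt_trans ig_le _; rewrite ltry.
apply: (le_trans (@le_normr_Rintegral _ _ _ mu _ g mD ig)).
rewrite -lee_fin /Rintegral fineK // ge0_fin_numE; last exact: integral_ge0.
by apply: le_lt_trans ig_le _; rewrite ltry.
Qed.

Lemma integral_expR_le (t r : R) : 0 < r ->
  (\int[mu]_(s in `]0%R, t[) (expR (- r * s))%:E <= (r^-1)%:E)%E.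
Proof.
move=> r0.
(* On ]0, t[ the integrand is the exponential density of rate r divided by r. *)
have pdf_ge0 s : (0 <= (exponential_pdf r s)%:E)%E.
  by rewrite lee_fin exponential_pdf_ge0 // ltW.
have mpdf : measurable_fun setT (exponential_pdf r) :=
  measurable_exponential_pdf r.
rewrite (_ : (\int[mu]_(s in _) _)%E =
    (\int[mu]_(s in `]0%R, t[) ((r^-1)%:E * (exponential_pdf r s)%:E))%E);
  last first.
  apply: eq_integral => s; rewrite inE /= in_itv /= => /andP[s0 _].
  by rewrite exponential_pdfE ?ltW // -EFinM mulrA mulVf ?mul1r // gt_eqF.
rewrite ge0_integralZl //; last 2 first.
- exact/measurable_EFinP/measurable_funTS.
- by rewrite lee_fin invr_ge0 ltW.
rewrite -[X in (_ <= X)%E]mule1 lee_pmul2l ?lte_fin ?invr_gt0 //.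
rewrite -(integral_exponential_pdf r0).
by apply: ge0_subset_integral => //; exact/measurable_EFinP.
Qed.

Lemma Rintegral_ge_measure (D I : set R) (g : R -> R) (m K : R) :
  measurable D -> measurable I -> I `<=` D -> (mu D < +oo)%E ->
  measurable_fun D g -> (forall s, D s -> 0 <= g s <= K) ->
  0 <= m -> (forall s, I s -> m <= g s) ->
  (m%:E * mu I <= (\int[mu]_(s in D) g s)%:E)%E.
Proof.
move=> mD mI ID Dfin mg gK m0 gm.
have g0 s : D s -> (0 <= (g s)%:E)%E by move=> /gK /andP[].
have mEg : measurable_fun D (EFin \o g) by exact/measurable_EFinP.
have int_le : (\int[mu]_(s in D) (g s)%:E <= K%:E * mu D)%E.
  rewrite -integral_cst //; apply: ge0_le_integral => //.
  by move=> s /gK /andP[].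
have int_fin : (\int[mu]_(s in D) (g s)%:E)%E \is a fin_num.
  rewrite ge0_fin_numE; last exact: integral_ge0.
  apply: le_lt_trans int_le _.
  by rewrite ltey_eq fin_numM // ge0_fin_numE // measure_ge0.
rewrite /Rintegral fineK // -integral_cst //.
apply: le_trans (ge0_subset_integral mu mI mD mEg g0 ID).
apply: ge0_le_integral => //; last exact: measurable_funS mEg.
Qed.

End RealIntegralBounds.

Section SquareSummable.
Variable R : realType.
Implicit Types x y : nat -> R[i].

Lemma l2norm2_le x y (c : R) : 0 <= c ->
  (forall n, cabs2 (x n) <= c * cabs2 (y n)) ->
  (l2norm2 x <= c%:E * l2norm2 y)%E.
Proof.
move=> c0 xy; rewrite /l2norm2 -nneseriesZl => [|n _]; first last.
  by rewrite lee_fin cabs2_ge0.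
apply: lee_nneseries => [n _|n _]; first by rewrite lee_fin cabs2_ge0.
by rewrite -EFinM lee_fin.
Qed.

Lemma l2norm2_single x (n0 : nat) : (forall n, n != n0 -> x n = 0) ->
  l2norm2 x = (cabs2 (x n0))%:E.
Proof.
move=> x0; rewrite /l2norm2 (@nneseriesD1 _ _ n0) // => [|n _]; last first.
  by rewrite lee_fin cabs2_ge0.
rewrite eseries0 ?adde0 // => n _ /andP[_ /x0 ->].
by rewrite /cabs2 /= expr0n /= addr0.
Qed.

Lemma in_X_le x y (c : R) : 0 <= c ->
  (forall n, cabs2 (x n) <= c * cabs2 (y n)) -> in_X y -> in_X x.
Proof.
move=> c0 xy Xy; apply: le_lt_trans (l2norm2_le c0 xy) _.
by rewrite lte_mul_pinfty // lee_fin.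
Qed.

Lemma in_X_cvg0 x : in_X x -> (fun n => cabs2 (x n)) @ \oo --> 0.
Proof.
move=> Xx; have x0 n : true -> (0 <= (cabs2 (x n))%:E)%E.
  by rewrite lee_fin cabs2_ge0.
apply: (fine_cvg (f := fun n => (cabs2 (x n))%:E)).
apply: (squeeze_cvge _ (cvg_cst 0%E) (nneseries_tail_cvg Xx x0)).
near=> N; rewrite x0 //=.
have := @nneseries_lim_ge R _ xpredT N N.+1 (fun n _ _ => x0 n isT).
by rewrite big_nat1.
Unshelve. all: by end_near.
Qed.

End SquareSummable.

Section BoundedInput.
Variable R : realType.
Local Notation mu := (@lebesgue_measure R).

Lemma cabs2_cintegral_cexp_le (t M : R) (l c : R[i]) (f : R -> R[i]) :
  Re l < 0 -> 0 <= M -> cmeasurable `]0, t[ f ->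
  {ae mu, forall s, `]0, t[ s -> cabs2 (f s) <= M} ->
  cabs2 (cintegral t (fun s => cexp (l * s%:C) * (f s * c)))
    <= 2 * (M * cabs2 c / Re l ^+ 2).
Proof.
move=> l0 M0 mf fM; set G := fun s => _ * _.
have mG : cmeasurable `]0, t[ G.
  apply: cmeasurableM; first exact: cmeasurable_cexp.
  by apply: cmeasurableM => //; exact: cmeasurable_cst.
set r := - Re l; have r0 : 0 < r by rewrite oppr_gt0.
set K := Num.sqrt M * Num.sqrt (cabs2 c).
have K0 : 0 <= K by rewrite mulr_ge0 // sqrtr_ge0.
have mexp : measurable_fun `]0, t[ (fun s => expR (- r * s)).
  by apply: measurableT_comp; [exact: measurable_expR|exact: mulrl_measurable].
have GK : {ae mu, forall s, `]0, t[ s ->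
    Num.sqrt (cabs2 (G s)) <= K * expR (- r * s)}.
  apply: (ae_mono _ fM) => s fMs /fMs fs_le.
  rewrite /G !cabs2M cabs2_cexp Re_mul_real sqrtrM ?sqr_ge0 // sqrtr_sqr.
  rewrite ger0_norm ?expR_ge0 // sqrtrM ?cabs2_ge0 // /r opprK mulrC /K.
  by rewrite ler_wpM2r ?expR_ge0 // ler_wpM2r ?sqrtr_ge0 // ler_wsqrtr.
have int_le (g : R -> R) : measurable_fun `]0, t[ g ->
    (forall s, `|g s| <= Num.sqrt (cabs2 (G s))) ->
    `|\int[mu]_(s in `]0, t[) g s| <= K / r.
  move=> mg gG.
  apply: (le_normr_Rintegral_dominated (h := fun s => K * expR (- r * s))) => //.
  - exact: measurable_funM.
  - by move=> s; rewrite mulr_ge0 // expR_ge0.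
  - by apply: (ae_mono _ GK) => s GKs /GKs; apply: le_trans.
  under eq_integral do rewrite EFinM.
  rewrite ge0_integralZl //; last exact/measurable_EFinP.
  by rewrite [(K / r)%:E]EFinM lee_wpmul2l ?lee_fin // integral_expR_le.
have /= := int_le _ mG.1 (fun s => normr_Re_le _).
have /= := int_le _ mG.2 (fun s => normr_Im_le _).
have -> : M * cabs2 c / Re l ^+ 2 = (K / r) ^+ 2.
  by rewrite expr_div_n exprMn !sqr_sqrtr ?cabs2_ge0 // /r sqrrN.
rewrite /cabs2 /cintegral /= !ler_norml => /andP[? ?] /andP[? ?].
nra.
Qed.

Lemma scaled_A_m1_Linf_admissible (lam : nat -> R[i]) (k : R) (u : nat -> R[i]) :
  (forall n, Re (lam n) < 0) ->
  (forall n, `|Im (lam n)| <= k * `|Re (lam n)|) ->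
  in_X u -> Linf_admissible_C lam (fun z n => z * A_m1 lam u n).
Proof.
move=> neg sector Xu t t0 f [mRe mIm [M fM]].
have M0 : 0 <= Num.max M 0 by rewrite le_max lexx orbT.
have fM' : {ae mu, forall s, `]0, t[ s -> cabs2 (f s) <= Num.max M 0}.
  by apply: (ae_mono _ fM) => s fMs /fMs; rewrite le_max => ->.
apply: (in_X_le (c := 2 * (Num.max M 0 * (1 + k ^+ 2)))) Xu.
  by rewrite !mulr_ge0 // addr_ge0 // sqr_ge0.
move=> n; rewrite /integral_T_m1 /T_m1 /A_m1.
apply: le_trans (cabs2_cintegral_cexp_le _ (neg n) M0 (conj mRe mIm) fM') _.
have lam2_gt0 : 0 < Re (lam n) ^+ 2 by rewrite exprn_even_gt0 // lt_eqF ?neg.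
rewrite -!mulrA ler_pM2l // cabs2M ler_wpM2l // ler_pdivrMr //.
by rewrite mulrAC ler_wpM2r ?cabs2_ge0 // sector_cabs2_le.
Qed.

Lemma l2norm2_res_A_m1_le (lam : nat -> R[i]) (k : R) (z : R[i]) (x : nat -> R[i]) :
  (forall n, Re (lam n) < 0) ->
  (forall n, `|Im (lam n)| <= k * `|Re (lam n)|) -> 0 < Re z ->
  (l2norm2 (res_A_m1 lam z (A_m1 lam x)) <= (1 + k ^+ 2)%:E * l2norm2 x)%E.
Proof.
move=> neg sector z0; apply: l2norm2_le => [|n].
  by rewrite addr_ge0 // sqr_ge0.
have Re_le : Re (lam n) ^+ 2 <= cabs2 (z - lam n).
  apply: le_trans (sqr_Re_le_cabs2 _); rewrite -sqrrN ler_sqr ?nnegrE.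
  - by rewrite raddfB /=; have := neg n; lra.
  - by rewrite oppr_ge0 ltW.
  - by rewrite raddfB /=; have := neg n; lra.
have lam2_gt0 : 0 < Re (lam n) ^+ 2 by rewrite exprn_even_gt0 // lt_eqF ?neg.
rewrite /res_A_m1 /A_m1 !cabs2M cabs2V mulrA ler_wpM2r ?cabs2_ge0 //.
rewrite mulrC ler_pdivrMr ?(lt_le_trans lam2_gt0) //.
apply: le_trans (sector_cabs2_le (sector n)) _.
by rewrite ler_wpM2l // addr_ge0 // sqr_ge0.
Qed.

End BoundedInput.

Lemma cvgNy_doubling_subseq (R : realType) (a : nat -> R) : a @ \oo --> -oo ->
  exists nj : nat -> nat,
    [/\ forall j, (j <= nj j)%N, forall j, 2 <= - a (nj j)
      & forall i j, (i < j)%N -> 2 * - a (nj i) <= - a (nj j)].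
Proof.
move=> a_Ny.
have beyond (T : R) (m : nat) : exists n, (m <= n)%N /\ T <= - a n.
  have [N _ aN] := cvgrNy_le a_Ny (- T).
  by exists (maxn N m); rewrite leq_maxr lerNr aN //= leq_maxl.
have [next next_spec] := choice (fun Tm => beyond Tm.1 Tm.2).
pose fix nj j :=
  if j is i.+1 then next (2 * - a (nj i), (nj i).+1) else next (2, 0%N).
have nj_ge2 j : 2 <= - a (nj j).
  elim: j => [|j IHj]; first exact: (next_spec (2, 0%N)).2.
  apply: le_trans (next_spec _).2 => /=; lra.
have nj_double j : 2 * - a (nj j) <= - a (nj j.+1) :=
  (next_spec (2 * - a (nj j), (nj j).+1)).2.
exists nj; split => //.
- elim=> // j IHj.
  exact: leq_ltn_trans IHj (next_spec (2 * - a (nj j), (nj j).+1)).1.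
- move=> i j; elim: j => // j IHj; rewrite ltnS leq_eqVlt => /predU1P[->//|/IHj].
  by move/le_trans; apply; apply: le_trans (nj_double j); have := nj_ge2 j; lra.
Qed.

Section UnboundedResponse.
Variables (R : realType) (lam : nat -> R[i]) (nj : nat -> nat).
Local Notation mu := (@lebesgue_measure R).
Local Notation r n := (- Re (lam n)).
Hypotheses (nj_ge : forall j, (j <= nj j)%N) (r_ge2 : forall j, 2 <= r (nj j))
  (r_double : forall i j, (i < j)%N -> 2 * r (nj i) <= r (nj j)).

Definition window n : set R := `[(r n)^-1, 2 * (r n)^-1[.

Definition selector n s : R := \1_(window n) s * \1_(range nj) n.

(* Normalising by |lam n| rather than by r n keeps the input bounded without
   any sector condition on lam. *)
Definition matched_input s n : R[i] :=
  (selector n s / Num.sqrt (cabs2 (lam n)))%:C * (cexp (lam n * s%:C) * lam n)^*%C.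

Lemma mem_window_nj j s : window (nj j) s -> 1 <= r (nj j) * s < 2.
Proof.
have r0 : 0 < r (nj j) by apply: lt_le_trans (r_ge2 j).
rewrite /window /= in_itv /= => /andP[lo hi]; apply/andP; split.
- by rewrite -(mulfV (lt0r_neq0 r0)) ler_pM2l.
- rewrite -(ltr_pM2l (_ : 0 < (r (nj j))^-1)) ?invr_gt0 //.
  by rewrite mulrA mulVf ?lt0r_neq0 // mul1r mulrC.
Qed.

Lemma window_nj_sub j : window (nj j) `<=` `]0, 1[.
Proof.
move=> s /[dup] /mem_window_nj /andP[lo hi]; have := r_ge2 j.
rewrite /= in_itv /=; nra.
Qed.

Lemma window_nj_inj i j s : window (nj i) s -> window (nj j) s -> i = j.
Proof.
move=> /mem_window_nj /andP[lo_i hi_i] /mem_window_nj /andP[lo_j hi_j].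
have s0 : 0 < s by have := r_ge2 i; nra.
have [/r_double|/r_double|//] := ltngtP i j; move=> double; exfalso; nra.
Qed.

Lemma selector_ge0 n s : 0 <= selector n s.
Proof. by rewrite /selector !indicE mulr_ge0. Qed.

Lemma selector_le1 n s : selector n s <= 1.
Proof.
rewrite /selector !indicE.
by case: (s \in _); case: (n \in _); rewrite ?mulr1 ?mulr0.
Qed.

Lemma selector_nj j s : window (nj j) s -> selector (nj j) s = 1.
Proof. by move=> Ws; rewrite /selector !indicE !mem_set ?mulr1 //; exists j. Qed.

Lemma selector_neq0 n s :
  selector n s != 0 -> exists2 j, n = nj j & window (nj j) s.
Proof.
rewrite /selector !indicE; have [/set_mem [j _ <-]|] := boolP (n \in range nj).
  have [/set_mem Ws _|] := boolP (s \in window (nj j)); first by exists j.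
  by rewrite mul0r eqxx.
by rewrite mulr0 eqxx.
Qed.

Lemma cabs2_matched_input_le1 s n : cabs2 (matched_input s n) <= 1.
Proof.
rewrite /matched_input.
have [/eqP ->|/selector_neq0 [j -> Ws]] := boolP (selector n s == 0).
  by rewrite mul0r cabs2M cabs2_real expr0n mul0r ler01.
rewrite selector_nj // cabs2M cabs2J cabs2M cabs2_real cabs2_cexp Re_mul_real.
rewrite expr_div_n expr1n sqr_sqrtr ?cabs2_ge0 // div1r.
have [->|c0] := eqVneq (cabs2 (lam (nj j))) 0; first by rewrite !mulr0 ler01.
rewrite mulrC mulfK // exprn_ile1 ?expR_ge0 // -expR0 ler_expR.
by have := r_ge2 j; have /andP[lo _] := mem_window_nj Ws; nra.
Qed.

Lemma l2norm2_matched_input_le1 s : (l2norm2 (matched_input s) <= 1%:E)%E.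
Proof.
have [n0 only_n0] : exists n0, forall n, n != n0 -> selector n s = 0.
  have [[n0 sel_n0]|none] := pselect (exists n0, selector n0 s != 0).
    exists n0 => n; apply: contraNeq => /selector_neq0 [j -> Wj].
    have [i n0E Wi] := selector_neq0 sel_n0.
    by rewrite n0E (window_nj_inj Wj Wi).
  by exists 0%N => n _; apply/eqP; apply: contra_notT none => sel_n; exists n.
rewrite (@l2norm2_single _ _ n0) ?lee_fin ?cabs2_matched_input_le1 // => n /only_n0.
by move=> sel0; rewrite /matched_input sel0 mul0r rmorph0 mul0r.
Qed.

Lemma matched_input_Linf : Linf_X 1 matched_input.
Proof.
have mb n : cmeasurable `]0, 1[ (fun s => matched_input s n).
  apply: cmeasurableM; last by apply/cmeasurableJ/cmeasurableM;
    [exact: cmeasurable_cexp|exact: cmeasurable_cst].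
  apply/cmeasurable_real/measurable_funM => //; rewrite /selector.
  apply: measurable_funM => //; apply: measurable_indic; exact: measurable_itv.
split; [exact: (fun n => (mb n).1)|exact: (fun n => (mb n).2)|].
by exists 1; apply: aeW => s _; exact: l2norm2_matched_input_le1.
Qed.

Lemma T_m1_A_m1_matched_input s n : T_m1 lam s (A_m1 lam (matched_input s)) n =
  (selector n s * expR (Re (lam n) * s) ^+ 2 * Num.sqrt (cabs2 (lam n)))%:C.
Proof.
rewrite /T_m1 /A_m1 /matched_input mulrA mul_real_conj.
rewrite cabs2M cabs2_cexp Re_mul_real.
congr (_%:C); set q := Num.sqrt _.
have -> : cabs2 (lam n) = q ^+ 2 by rewrite sqr_sqrtr // cabs2_ge0.
by have [->|q0] := eqVneq q 0; [rewrite expr0n !mulr0 | field].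
Qed.

Definition matched_response : nat -> R[i] :=
  integral_T_m1 lam 1 (fun s => A_m1 lam (matched_input s)).

Lemma matched_response_nj j : expR (-4) ^+ 2 <= cabs2 (matched_response (nj j)).
Proof.
set n := nj j; have r2 := r_ge2 j; have r0 : 0 < r n by lra.
pose g s := selector n s * expR (Re (lam n) * s) ^+ 2 * Num.sqrt (cabs2 (lam n)).
have mg : measurable_fun (`]0, 1[ : set R) g.
  apply: measurable_funM => //; apply: measurable_funM; rewrite /selector.
    by apply: measurable_funM => //; apply: measurable_indic; exact: measurable_itv.
  apply: measurable_funX; apply: measurableT_comp; first exact: measurable_expR.
  exact: mulrl_measurable.
have g_bound s : (`]0, 1[ : set R) s -> 0 <= g s <= Num.sqrt (cabs2 (lam n)).
  rewrite /= in_itv /= => /andP[s0 _].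
  have e1 : expR (Re (lam n) * s) ^+ 2 <= 1.
    by rewrite exprn_ile1 ?expR_ge0 // -expR0 ler_expR; nra.
  rewrite /g !mulr_ge0 ?sqrtr_ge0 ?sqr_ge0 ?selector_ge0 //= -[X in _ <= X]mul1r.
  by rewrite ler_wpM2r ?sqrtr_ge0 // mulr_ile1 ?sqr_ge0 ?selector_ge0 ?selector_le1.
have g_window s : window n s -> expR (-4) * r n <= g s.
  move=> Ws; have /andP[_ hi] := mem_window_nj Ws.
  rewrite /g selector_nj // mul1r -expRM_natl; apply: ler_pM.
  - exact: expR_ge0.
  - exact: ltW.
  - by rewrite ler_expR; lra.
  - by apply: le_trans (normr_Re_le _); rewrite ler0_norm //; lra.
have int_g : expR (-4) <= \int[mu]_(s in (`]0, 1[ : set R)) g s.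
  have D_fin : (mu `]0%R, 1%R[ < +oo)%E.
    by rewrite lebesgue_measure_itv /= lte_fin ltr01 -EFinB ltry.
  have m0 : 0 <= expR (-4) * r n by rewrite mulr_ge0 ?expR_ge0 ?ltW.
  have := Rintegral_ge_measure (measurable_itv _) (measurable_itv _)
    (@window_nj_sub j) D_fin mg g_bound m0 g_window.
  rewrite lebesgue_measure_itv /= lte_fin ifT; last first.
    by rewrite ltr_pMl ?invr_gt0 ?ltr1n.
  rewrite -EFinD -EFinM lee_fin -/n -mulrA.
  have -> : r n * (2 / r n - (r n)^-1) = 1.
    by rewrite mulrBr mulrCA mulfV ?lt0r_neq0 // mulr1; lra.
  by rewrite mulr1.
rewrite /matched_response /integral_T_m1.
rewrite (_ : (fun s => _) = fun s => (g s)%:C); last first.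
  by apply/funext => s; rewrite T_m1_A_m1_matched_input.
rewrite /cintegral /cabs2 /=; have := expR_ge0 (-4 : R); nra.
Qed.

Lemma matched_response_notin_X : ~ in_X matched_response.
Proof.
move=> /in_X_cvg0 /cvgr_lt /(_ (expR (-4) ^+ 2)) [|N _ small].
  by rewrite exprn_gt0 ?expR_gt0.
by have := small _ (nj_ge N); rewrite ltNge matched_response_nj.
Qed.

End UnboundedResponse.

Lemma A_m1_not_Linf_admissible (R : realType) (lam : nat -> R[i]) :
  (fun n => Re (lam n)) @ \oo --> -oo -> ~ Linf_admissible_X lam (A_m1 lam).
Proof.
move=> /cvgNy_doubling_subseq [nj [nj_ge r_ge2 r_double]] adm.
apply: (matched_response_notin_X nj_ge r_ge2).
exact: adm _ ltr01 _ (matched_input_Linf r_ge2 r_double).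
Qed.

Theorem proposition14 (R : realType) (lam : nat -> R[i]) (k : R) :
  (forall n, complex.Re (lam n) < 0) ->
  (forall n m, (n <= m)%N -> complex.Re (lam m) <= complex.Re (lam n)) ->
  (fun n => complex.Re (lam n)) @ \oo --> -oo ->
  0 < k ->
  (forall n, `|complex.Im (lam n)| <= k * `|complex.Re (lam n)|) ->
  (* (i) for every u in U = X, z |-> z (B u) is L^oo-admissible *)
  (forall u : nat -> R[i], in_X u ->
     Linf_admissible_C lam (fun z : R[i] => fun n => z * A_m1 lam u n))
  (* (ii) B = A_{-1} is not L^oo-admissible *)
  /\ ~ Linf_admissible_X lam (A_m1 lam)
  (* (iii) sup_{Re z > 0} || R(z, A_{-1}) B ||_{L(U,X)} < oo *)
  /\ (exists M : R, forall z : R[i], 0 < complex.Re z ->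
        forall x : nat -> R[i], in_X x ->
          (l2norm2 (res_A_m1 lam z (A_m1 lam x)) <= M%:E * l2norm2 x)%E).
Proof.
move=> neg _ Re_Ny _ sector; split; [|split].
- by move=> u Xu; exact: scaled_A_m1_Linf_admissible neg sector Xu.
- exact: A_m1_not_Linf_admissible.
- by exists (1 + k ^+ 2) => z z0 x _; exact: l2norm2_res_A_m1_le.
Qed.
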